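(* Let $\mathbf A\in\mathbb H^{m\times n}$ and $t\in\mathbb R$. Then for all $i=1,\dots,n$ and $j=1,\dots,m$, \[ \operatorname{cdet}_i\big((t\mathbf I+\mathbf A^{*}\mathbf A)_{.i}(\mathbf a^{*}_{.j})\big)=c_1^{(ij)}t^{n-1}+c_2^{(ij)}t^{n-2}+\dots+c_n^{(ij)}, \] where $c_n^{(ij)}=\operatorname{cdet}_i\big((\mathbf A^{*}\mathbf A)_{.i}(\mathbf a^{*}_{.j})\big)$ and $c_k^{(ij)}=\sum_{\beta\in J_{k,n}\{i\}}\operatorname{cdet}_i\Big(\big((\mathbf A^{*}\mathbf A)_{.i}(\mathbf a^{*}_{.j})\big)^{\beta}_{\beta}\Big)$ for $k=1,\dots,n-1$.
   Context: $\mathbb H$ is the quaternion skew field, $\mathbf A^*$ the conjugate transpose, $\mathbf a^*_{.j}$ the $j$th column of $\mathbf A^*$; $\mathbf M_{.i}(\mathbf b)$ is $\mathbf M$ with its $i$th column replaced by $\mathbf b$. Column determinant of $\mathbf M=(m_{ij})\in\mathbb H^{n\times n}$: $\operatorname{cdet}_j\mathbf M=\sum_{\tau\in S_n}(-1)^{n-r}m_{j_{k_r}j_{k_r+l_r}}\cdots m_{j_{k_r+1}j_{k_r}}\cdots m_{j\,j_{k_1+l_1}}\cdots m_{j_{k_1+1}j_{k_1}}m_{j_{k_1}j}$, where $\tau=(j_{k_r+l_r}\dots j_{k_r+1}j_{k_r})\cdots(j_{k_2+l_2}\dots j_{k_2})(j_{k_1+l_1}\dots j_{k_1+1}j_{k_1}\,j)$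 is the decomposition of $\tau$ into $r$ disjoint cycles (fixed points included), the rightmost cycle ending with $j$, each other cycle ending on the right with its smallest element, and $j_{k_2}<\dots<j_{k_r}$. $L_{k,n}$ is the set of strictly increasing $k$-sequences from $\{1,\dots,n\}$ and $J_{k,n}\{i\}=\{\beta\in L_{k,n}: i\in\beta\}$. $\mathbf N^{\beta}_{\beta}$ is the principal submatrix of $\mathbf N$ with rows and columns indexed by $\beta$; in $\operatorname{cdet}_i(\mathbf N^\beta_\beta)$ the subscript $i$ refers to the column of the submatrix coming from column $i$ of $\mathbf N$. *)

From HB Require Import structures.
From mathcomp Require Import all_boot all_order all_algebra all_fingroup.
From mathcomp Require Import ring.
From mathcomp Require Export reals.
Set Implicit Arguments. Unset Strict Implicit. Unset Printing Implicit Defensive.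
Import GRing.Theory.
Local Open Scope ring_scope.

(* The quaternion algebra H(R) = R + R i + R j + R k, i^2=j^2=k^2=ijk=-1 *)
Record quat (R : Type) := Quat { q0 : R; q1 : R; q2 : R; q3 : R }.
Arguments Quat {R}.

Section QuatRing.
Variable R : comNzRingType.

Definition quat2tup (q : quat R) := (q0 q, q1 q, q2 q, q3 q).
Definition tup2quat (x : R * R * R * R) := let: (a, b, c, d) := x in Quat a b c d.
Lemma quat2tupK : cancel quat2tup tup2quat. Proof. by case. Qed.

HB.instance Definition _ := Equality.copy (quat R) (can_type quat2tupK).
HB.instance Definition _ := Choice.copy (quat R) (can_type quat2tupK).

Definition quat0 : quat R := Quat 0 0 0 0.
Definition quat1 : quat R := Quat 1 0 0 0.
Definition addq (p q : quat R) :=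
  Quat (q0 p + q0 q) (q1 p + q1 q) (q2 p + q2 q) (q3 p + q3 q).
Definition oppq (p : quat R) := Quat (- q0 p) (- q1 p) (- q2 p) (- q3 p).
Definition mulq (p q : quat R) :=
  Quat (q0 p * q0 q - q1 p * q1 q - q2 p * q2 q - q3 p * q3 q)
       (q0 p * q1 q + q1 p * q0 q + q2 p * q3 q - q3 p * q2 q)
       (q0 p * q2 q - q1 p * q3 q + q2 p * q0 q + q3 p * q1 q)
       (q0 p * q3 q + q1 p * q2 q - q2 p * q1 q + q3 p * q0 q).

Lemma addqA : associative addq.
Proof. by case=> ? ? ? ? [? ? ? ?] [? ? ? ?]; rewrite /addq /= !addrA. Qed.
Lemma addqC : commutative addq.
Proof. by case=> ? ? ? ? [? ? ? ?]; rewrite /addq /=; congr Quat; apply: addrC. Qed.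
Lemma add0q : left_id quat0 addq.
Proof. by case=> ? ? ? ?; rewrite /addq /= !add0r. Qed.
Lemma addNq : left_inverse quat0 oppq addq.
Proof. by case=> ? ? ? ?; rewrite /addq /= !addNr. Qed.

HB.instance Definition _ := GRing.isZmodule.Build (quat R) addqA addqC add0q addNq.

Lemma mulqA : associative mulq.
Proof.
by case=> a b c d [e f g h] [i j k l]; rewrite /mulq /=; congr Quat; ring.
Qed.
Lemma mul1q : left_id quat1 mulq.
Proof. by case=> a b c d; rewrite /mulq /=; congr Quat; ring. Qed.
Lemma mulq1 : right_id quat1 mulq.
Proof. by case=> a b c d; rewrite /mulq /=; congr Quat; ring. Qed.
Lemma mulqDl : left_distributive mulq addq.
Proof.
by case=> a b c d [e f g h] [i j k l]; rewrite /mulq /= /addq /=; congr Quat; ring.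
Qed.
Lemma mulqDr : right_distributive mulq addq.
Proof.
by case=> a b c d [e f g h] [i j k l]; rewrite /mulq /= /addq /=; congr Quat; ring.
Qed.
Lemma quat1_neq0 : quat1 != 0.
Proof. by apply/eqP => -[] /eqP; rewrite oner_eq0. Qed.

HB.instance Definition _ := GRing.Zmodule_isNzRing.Build (quat R)
  mulqA mul1q mulq1 mulqDl mulqDr quat1_neq0.

Definition qreal (r : R) : quat R := Quat r 0 0 0.
Definition qconj (p : quat R) : quat R := Quat (q0 p) (- q1 p) (- q2 p) (- q3 p).

End QuatRing.

Section QuatMatrices.
Variable R : comNzRingType.
Local Notation H := (quat R).

Definition conjtr m n (A : 'M[H]_(m, n)) : 'M[H]_(n, m) := map_mx (@qconj R) A^T.

(* M_{.i}(b): M with its i-th column replaced by b *)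
Definition col_repl m n (M : 'M[H]_(m, n)) (i : 'I_n) (b : 'cV[H]_m) : 'M[H]_(m, n) :=
  \matrix_(a, c) if c == i then b a 0 else M a c.

(* product m_{s tau(s)} m_{tau(s) tau^2(s)} ... m_{tau^{-1}(s) s}
   over the cycle of tau through s, read from s *)
Definition cycle_prod n (M : 'M[H]_n) (tau : 'S_n) (s : 'I_n) : H :=
  \prod_(k < #|porbit tau s|) M ((tau ^+ k)%g s) ((tau ^+ k.+1)%g s).

(* leading elements of the cycles of tau in the order used by cdet_j:
   the minima of the cycles not containing j, in decreasing order,
   followed by j itself *)
Definition cdet_heads n (tau : 'S_n) (j : 'I_n) : seq 'I_n :=
  rcons [seq s <- rev (enum 'I_n) |
          (s \notin porbit tau j) && [forall x in porbit tau s, (s <= x)%N]] j.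

Definition cdet n (j : 'I_n) (M : 'M[H]_n) : H :=
  \sum_(tau : 'S_n)
    (-1) ^+ (n - #|porbits tau|) *
    \prod_(s <- cdet_heads tau j) cycle_prod M tau s.

(* principal submatrix N^beta_beta for beta : 'I_k -> 'I_n (increasing) *)
Definition princ_sub n k (N : 'M[H]_n) (beta : 'I_k -> 'I_n) : 'M[H]_k :=
  \matrix_(a, b) N (beta a) (beta b).

Definition strictly_incr n k (beta : {ffun 'I_k -> 'I_n}) : bool :=
  [forall a : 'I_k, forall b : 'I_k, (a < b)%N ==> (beta a < beta b)%N].

(* sum_{beta in J_{k,n}{i}} cdet_i (N^beta_beta) ; beta ranges over strictly
   increasing k-sequences, and a over the (unique, if any) position with
   beta a = i, i.e. the column of the submatrix coming from column i *)
Definition sum_principal_cdet n k (N : 'M[H]_n) (i : 'I_n) : H :=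
  \sum_(beta : {ffun 'I_k -> 'I_n} | strictly_incr beta)
    \sum_(a : 'I_k | beta a == i) cdet a (princ_sub N beta).

End QuatMatrices.

From Pilot Require Import Defs.
From mathcomp Require Import all_boot all_order all_algebra all_fingroup.
From mathcomp Require Import reals.
From mathcomp Require Import zify ring.
Import GRing.Theory.
Local Open Scope ring_scope.
Set Implicit Arguments. Unset Strict Implicit. Unset Printing Implicit Defensive.

(* In [(t I + M)_{.i}(b)] the scalar [t] only occurs in diagonal entries off
   column [i], and a diagonal entry enters a cycle product of [cdet_i] only
   through a fixed point, which is always a cycle head.  As [t] is real, hence
   central, expanding the product of the factors [m_hh + t] gives, for each set
   [F] of fixed points avoiding [i], the term [t^|F|] times the sum over the
   permutations fixing [F] pointwise.  These are exactly the extensions by the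
   identity of the permutations of the complement [B] of [F]; extension along
   the increasing enumeration of [B] preserves [n - #cycles], the order of the
   cycle heads and the cycle products, so that sum is [cdet_i] of the principal
   submatrix on [B].  Grouping the sets [B] by cardinality gives the
   coefficients. *)

Lemma big_subset_setD1 (T : finType) (V : nmodType) (P : {set T}) h
    (g : {set T} -> V) : h \in P ->
  \sum_(F : {set T} | F \subset P) g F =
  \sum_(F : {set T} | F \subset P :\ h) g F +
  \sum_(F : {set T} | F \subset P :\ h) g (h |: F).
Proof.
move=> hP; rewrite (bigID (fun F : {set T} => h \in F)) /= addrC; congr (_ + _).
  apply: eq_bigl => F; rewrite subsetD1 andbC.
  by case: (h \in F); rewrite ?andbF //= sub1set.
rewrite (reindex_onto (fun F => h |: F) (fun F => F :\ h)) /=; last first.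
  by move=> F /andP[_ hF]; rewrite setD1K.
apply: eq_bigl => F; rewrite setU11 andbT subUset sub1set hP /= subsetD1.
apply/andP/andP => [[FP /eqP <-]|[FP hF]]; last by rewrite setU1K.
by rewrite !inE eqxx andbT (subset_trans (subsetDl _ _)) // subUset sub1set hP.
Qed.

Lemma prodD_central_subsets (T : finType) (V : nzRingType) (c : V) (x : T -> V)
    (s : seq T) (P : {set T}) :
  (forall y, GRing.comm c y) -> uniq s -> {subset P <= s} ->
  \prod_(h <- s) (x h + c *+ (h \in P)) =
  \sum_(F : {set T} | F \subset P) c ^+ #|F| * \prod_(h <- s | h \notin F) x h.
Proof.
move=> cC; elim: s P => [|h s IHs] P /=.
  move=> _ sP0; have -> : P = set0 by apply/setP => y; rewrite inE; apply/negP => /sP0.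
  by rewrite big_nil (big_pred1 set0) => [|F]; rewrite ?cards0 ?big_nil ?mulr1 ?subset0.
case/andP=> hs us sP; rewrite big_cons.
have cXC k y : GRing.comm (c ^+ k) y by apply/commr_sym/commrX/commr_sym.
have [hP|hNP] := boolP (h \in P).
  have sPh : {subset P :\ h <= s}.
    by move=> y /setD1P[yh /sP]; rewrite inE (negbTE yh).
  rewrite (eq_big_seq (fun y => x y + c *+ (y \in P :\ h))); last first.
    by move=> y ys; rewrite !inE; case: (y =P h) ys hs => [-> ->|].
  rewrite IHs // (big_subset_setD1 _ hP) mulr1n mulrDl !mulr_sumr.
  congr (_ + _); apply: eq_bigr => F /subsetD1P[_ hF].
    by rewrite big_cons hF mulrA -cXC mulrA.
  rewrite big_cons setU11 cardsU1 hF exprS mulrA; congr (_ * _).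
  rewrite [LHS]big_seq_cond [RHS]big_seq_cond; apply: eq_bigl => y.
  by rewrite !inE; case: (y =P h) => [->|//]; rewrite (negbTE hs).
have sPs : {subset P <= s}.
  move=> y yP; move: (sP y yP); rewrite inE => /orP[/eqP yh|//].
  by rewrite -yh yP in hNP.
rewrite mulr0n addr0 IHs // mulr_sumr; apply: eq_bigr => F FP.
have hF : h \notin F by apply: contraNN hNP => /(subsetP FP).
by rewrite big_cons hF mulrA -cXC mulrA.
Qed.

Section RealQuaternions.
Variable R : comNzRingType.

Lemma qreal_comm (t : R) (x : quat R) : GRing.comm (qreal t) x.
Proof.
case: x => a b c d.
change (Defs.mulq (qreal t) (Quat a b c d) = Defs.mulq (Quat a b c d) (qreal t)).
by rewrite /Defs.mulq /qreal /=; congr Quat; ring.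
Qed.

Lemma qrealM (s t : R) : qreal (s * t) = qreal s * qreal t.
Proof.
change (qreal (s * t) = Defs.mulq (qreal s) (qreal t)).
by rewrite /Defs.mulq /=; congr Quat; ring.
Qed.

Lemma qrealX (t : R) k : qreal (t ^+ k) = qreal t ^+ k.
Proof. by elim: k => [|k IHk] //; rewrite !exprS qrealM IHk. Qed.

End RealQuaternions.

Lemma porbit_fixed (T : finType) (s : {perm T}) x : s x = x -> porbit s x = [set x].
Proof.
move=> sx; apply/setP => y; rewrite inE; apply/porbitP/eqP => [[k ->]|->].
  exact: permX_fix.
by exists 0; rewrite expg0 perm1.
Qed.

Section CycleProducts.
Variables (R : comNzRingType) (n : nat).
Implicit Types (M P : 'M[quat R]_n) (s : 'S_n).

Lemma cycle_prod_fixed M s h : s h = h -> cycle_prod M s h = M h h.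
Proof.
by move=> sh; rewrite /cycle_prod porbit_fixed // cards1 big_ord1 expg0 expg1 perm1 sh.
Qed.

Lemma eq_cycle_prod_offdiag M1 M2 s h :
  s h != h -> (forall x y, x != y -> M1 x y = M2 x y) ->
  cycle_prod M1 s h = cycle_prod M2 s h.
Proof.
move=> sh eM; apply: eq_bigr => k _; apply: eM.
by rewrite expgS permM (inj_eq perm_inj) eq_sym.
Qed.

Definition fixed_off s (i : 'I_n) := [set x | (s x == x) && (x != i)].

Lemma cycle_prod_col_repl_scalar_add P i b t s h :
  cycle_prod (col_repl ((qreal t)%:M + P) i b) s h =
  cycle_prod (col_repl P i b) s h + qreal t *+ (h \in fixed_off s i).
Proof.
rewrite inE; have [sh|sh] := eqVneq (s h) h; last first.
  apply/esym; rewrite addr0; apply: eq_cycle_prod_offdiag => // x y xy.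
  by rewrite !mxE; case: (y == i); rewrite // (negbTE xy) mulr0n add0r.
rewrite !cycle_prod_fixed // !mxE eqxx /=.
by case: (h =P i) => _; rewrite ?addr0 // addrC.
Qed.

Lemma cdet_heads_uniq s i : uniq (cdet_heads s i).
Proof.
by rewrite /cdet_heads rcons_uniq mem_filter porbit_id filter_uniq ?rev_uniq ?enum_uniq.
Qed.

Lemma fixed_off_cdet_heads s i : {subset fixed_off s i <= cdet_heads s i}.
Proof.
move=> x; rewrite inE => /andP[/eqP sx xi].
rewrite /cdet_heads mem_rcons inE (negbTE xi) mem_filter mem_rev mem_enum andbT.
rewrite porbit_sym !porbit_fixed // inE eq_sym xi /=.
by apply/forallP => y; apply/implyP; rewrite inE => /eqP ->.
Qed.

End CycleProducts.

(* [cdet_i] of the principal submatrix of [N] on [B], computed inside ['S_n]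
   (see [cdet_on_incr]). *)
Definition cdet_on (R : comNzRingType) n (N : 'M[quat R]_n) (i : 'I_n)
    (B : {set 'I_n}) : quat R :=
  \sum_(s : 'S_n | [forall x in ~: B, s x == x])
    (-1) ^+ (n - #|porbits s|) * \prod_(h <- cdet_heads s i | h \in B) cycle_prod N s h.

Section PrincipalExpansion.
Variables (R : comNzRingType) (n : nat).
Implicit Types (N P : 'M[quat R]_n) (i : 'I_n).

Lemma cdet_on_setT N i : cdet_on N i setT = cdet i N.
Proof.
apply: eq_big => [s|s _]; first by apply/forallP => x; rewrite !inE.
by congr (_ * _); apply: eq_bigl => h; rewrite inE.
Qed.

Lemma cdet_col_repl_scalar_add P i b t :
  cdet i (col_repl ((qreal t)%:M + P) i b) =
  \sum_(B : {set 'I_n} | i \in B) cdet_on (col_repl P i b) i B * qreal t ^+ (n - #|B|).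
Proof.
have tC k y : GRing.comm (qreal t ^+ k) y by apply/commr_sym/commrX/commr_sym/qreal_comm.
rewrite /cdet; under eq_bigr => s _.
  rewrite (eq_bigr _ (fun h _ => cycle_prod_col_repl_scalar_add P i b t s h)).
  rewrite prodD_central_subsets; last exact: fixed_off_cdet_heads.
  - rewrite mulr_sumr.
    by under eq_bigr => F _ do rewrite (tC _ (\prod_(_ <- _ | _) _)) mulrA; over.
  - exact: qreal_comm.
  - exact: cdet_heads_uniq.
rewrite (exchange_big_dep (fun F : {set 'I_n} => i \notin F)) /=; last first.
  by move=> s F _ /subsetP sF; apply/negP => /sF; rewrite inE eqxx andbF.
rewrite [RHS](reindex_inj (@setC_inj _)) /=; apply: eq_big => [F|F iF]; first by rewrite inE.
have -> : (n - #|~: F| = #|F|)%N by rewrite [in RHS]cardsCs card_ord.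
rewrite -mulr_suml /cdet_on setCK; congr (_ * _); apply: eq_big => [s|s _].
  apply/subsetP/forallP => [sF x|sF x xF].
    by apply/implyP => /sF; rewrite inE => /andP[].
  by rewrite inE (eqP (implyP (sF x) xF)) eqxx; apply: contraNneq iF => <-.
by congr (_ * _); apply: eq_bigl => h; rewrite inE.
Qed.

End PrincipalExpansion.

Section ExtendPerm.
Variables (n k : nat) (b : 'I_k -> 'I_n).
Hypothesis b_inj : injective b.
Implicit Types (s : 'S_k) (a : 'I_k) (x : 'I_n).

Local Notation B := [set x in codom b].

Definition extend_perm_fun s x : 'I_n :=
  if [pick a | b a == x] is Some a then b (s a) else x.

Lemma pick_codom a : [pick a' | b a' == b a] = Some a.
Proof. by case: pickP => [a' /eqP /b_inj -> // | /(_ a)]; rewrite eqxx. Qed.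

Lemma pick_notin_codom x : x \notin codom b -> [pick a | b a == x] = None.
Proof. by move=> xb; case: pickP => // a /eqP ea; rewrite -ea codom_f in xb. Qed.

Lemma extend_perm_fun_inj s : injective (extend_perm_fun s).
Proof.
rewrite /extend_perm_fun => x y.
case: (boolP (x \in codom b)) => [/codomP[a ->]|xb];
  case: (boolP (y \in codom b)) => [/codomP[a' ->]|yb];
  rewrite ?pick_codom ?pick_notin_codom //.
- by move/b_inj/perm_inj ->.
- by move=> ey; rewrite -ey codom_f in yb.
- by move=> ex; rewrite ex codom_f in xb.
Qed.

Definition extend_perm s : 'S_n := perm (@extend_perm_fun_inj s).

Lemma extend_permE s a : extend_perm s (b a) = b (s a).
Proof. by rewrite permE /extend_perm_fun pick_codom. Qed.

Lemma extend_perm_out s x : x \notin codom b -> extend_perm s x = x.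
Proof. by move=> xb; rewrite permE /extend_perm_fun pick_notin_codom. Qed.

Lemma extend_permX s a m : (extend_perm s ^+ m)%g (b a) = b ((s ^+ m)%g a).
Proof. by elim: m => [|m IHm]; rewrite ?expg0 ?perm1 // !expgSr !permM IHm extend_permE. Qed.

Lemma extend_perm_inj : injective extend_perm.
Proof. by move=> s1 s2 e; apply/permP => a; apply: b_inj; rewrite -!extend_permE e. Qed.

Lemma porbit_extend_perm s a : porbit (extend_perm s) (b a) = b @: porbit s a.
Proof.
apply/setP => y; apply/porbitP/imsetP => [[m ->]|[z /porbitP[m ->] ->]].
  by exists ((s ^+ m)%g a); rewrite ?mem_porbit // extend_permX.
by exists m; rewrite extend_permX.
Qed.

Lemma porbits_extend_perm s :
  porbits (extend_perm s) =
  [set b @: S | S : {set 'I_k} in porbits s] :|: [set [set x] | x in ~: B].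
Proof.
apply/setP => S; rewrite inE; apply/imsetP/orP.
  case=> x _ ->; have [/codomP[a ->]|xb] := boolP (x \in codom b).
    by left; rewrite porbit_extend_perm imset_f // imset_f.
  by right; rewrite porbit_fixed ?extend_perm_out // imset_f // !inE.
case=> /imsetP[O].
  by case/imsetP=> a _ -> ->; exists (b a); rewrite ?porbit_extend_perm.
rewrite !inE => xb ->; exists O => //.
by rewrite porbit_fixed ?extend_perm_out.
Qed.

Lemma card_porbits_extend_perm s :
  #|porbits (extend_perm s)| = (#|porbits s| + (n - k))%N.
Proof.
have cardB : #|B| = k by rewrite cardsE card_codom // card_ord.
have disj :
    [set b @: S | S : {set 'I_k} in porbits s] :&: [set [set x] | x in ~: B] = set0.
  apply/setP => S; rewrite !inE; apply/andP => -[/imsetP[O _ ->] /imsetP[x]].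
  rewrite inE => xb /setP/(_ x); rewrite set11 => /imsetP[a _ xa].
  by rewrite xa !inE codom_f in xb.
rewrite porbits_extend_perm cardsU disj cards0 subn0 card_imset; last exact: imset_inj.
rewrite [X in (_ + X)%N]card_imset; last exact: set1_inj.
by rewrite [#|~: B|]cardsCs setCK cardB card_ord.
Qed.

Lemma extend_perm_onto (t : 'S_n) :
  [forall x in ~: B, t x == x] -> exists s, t = extend_perm s.
Proof.
move=> /forallP tfix; have tb a : t (b a) \in codom b.
  apply: contraT => tbN; have /eqP/perm_inj tba : t (t (b a)) == t (b a).
    by apply: (implyP (tfix _)); rewrite !inE.
  by rewrite tba codom_f in tbN.
pose f a := odflt a [pick a' | b a' == t (b a)].
have fE a : b (f a) = t (b a).
  by rewrite /f; case/codomP: (tb a) => a' ->; rewrite pick_codom.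
have f_inj : injective f by move=> x y /(congr1 b); rewrite !fE => /perm_inj /b_inj.
exists (perm f_inj); apply/permP => x; have [/codomP[a ->]|xb] := boolP (x \in codom b).
  by rewrite extend_permE permE fE.
by rewrite extend_perm_out // (eqP (implyP (tfix x) _)) // !inE.
Qed.

Lemma cycle_prod_extend_perm (R : comNzRingType) (M : 'M[quat R]_n) s a :
  cycle_prod M (extend_perm s) (b a) = cycle_prod (princ_sub M b) s a.
Proof.
rewrite /cycle_prod porbit_extend_perm card_imset //; apply: eq_bigr => m _.
by rewrite !extend_permX mxE.
Qed.

End ExtendPerm.

Lemma ltn_sorted_enum_ord m : sorted (relpre (@nat_of_ord m) ltn) (enum 'I_m).
Proof. by rewrite -sorted_map val_enum_ord iota_ltn_sorted. Qed.

Section IncreasingIndex.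
Variables (n k : nat) (b : 'I_k -> 'I_n).
Hypothesis b_incr : {homo b : a a' / (a < a')%N}.

Lemma incr_leq : {mono b : a a' / (a <= a')%N}.
Proof.
move=> a a'; case: (ltngtP a a') => [lt_aa'|lt_a'a|/val_inj ->]; last exact: leqnn.
  exact/ltnW/b_incr.
by apply/negbTE; rewrite -ltnNge b_incr.
Qed.

Lemma incr_inj : injective b.
Proof. by move=> a a' e; apply/val_inj/eqP; rewrite eqn_leq -!incr_leq e !leqnn. Qed.

Lemma filter_codom_incr : [seq x <- enum 'I_n | x \in codom b] = map b (enum 'I_k).
Proof.
apply: (@irr_sorted_eq _ (relpre (@nat_of_ord n) ltn)).
- by move=> ? ? ?; apply: ltn_trans.
- by move=> x; rewrite /= ltnn.
- by apply: sorted_filter (ltn_sorted_enum_ord n) => ? ? ?; apply: ltn_trans.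
- by rewrite sorted_map; apply: sub_sorted (ltn_sorted_enum_ord k) => x y; apply: b_incr.
- by move=> x; rewrite mem_filter mem_enum andbT codomE.
Qed.

End IncreasingIndex.

Section IncreasingPrincipal.
Variables (R : comNzRingType) (n k : nat) (b : 'I_k -> 'I_n).
Hypothesis b_incr : {homo b : a a' / (a < a')%N}.
Let b_inj := incr_inj b_incr.

Lemma cdet_heads_extend_perm s a :
  [seq h <- cdet_heads (extend_perm b_inj s) (b a) | h \in codom b] =
  map b (cdet_heads s a).
Proof.
have filterC (p q : pred 'I_n) r : filter p (filter q r) = filter q (filter p r).
  by rewrite -!filter_predI; apply: eq_filter => x /=; rewrite andbC.
rewrite /cdet_heads filter_rcons codom_f map_rcons !filter_rev filterC map_rev.
rewrite (filter_codom_incr b_incr) filter_map; congr (rcons (rev (map b _)) _).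
apply: eq_filter => y /=; rewrite !porbit_extend_perm (mem_imset _ _ b_inj); congr andb.
apply/forallP/forallP => [le_y z|le_y x]; apply/implyP.
  by move=> zy; rewrite -(incr_leq b_incr) (implyP (le_y (b z))) ?mem_imset.
by case/imsetP=> z zy ->; rewrite (incr_leq b_incr) (implyP (le_y z)).
Qed.

Lemma cdet_on_incr (N : 'M[quat R]_n) a :
  cdet_on N (b a) [set x in codom b] = cdet a (princ_sub N b).
Proof.
rewrite /cdet_on (eq_bigl (mem [set extend_perm b_inj s | s : 'S_k])); last first.
  move=> t; apply/idP/imsetP => [/(extend_perm_onto b_inj)[s ->]|[s _ ->]]; first by exists s.
  by apply/forallP => x; apply/implyP; rewrite !inE => xb; rewrite extend_perm_out.
rewrite big_imset /=; last by move=> s1 s2 _ _; apply: extend_perm_inj.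
apply: eq_bigr => s _; rewrite card_porbits_extend_perm.
have le_kn : (k <= n)%N by rewrite -[k]card_ord -[n]card_ord (leq_card _ b_inj).
have le_orbits : (#|porbits s| <= k)%N by rewrite -[X in (_ <= X)%N]card_ord leq_imset_card.
congr (_ ^+ _ * _); first by lia.
rewrite (eq_bigl (mem (codom b))) => [|x]; last by rewrite !inE.
rewrite -big_filter cdet_heads_extend_perm big_map.
by apply: eq_bigr => y _; rewrite cycle_prod_extend_perm.
Qed.

End IncreasingPrincipal.

Lemma strictly_incrP n k (bt : {ffun 'I_k -> 'I_n}) :
  reflect {homo bt : a a' / (a < a')%N} (strictly_incr bt).
Proof.
apply: (iffP forallP) => [incr a a'|incr a]; first exact/implyP/(forallP (incr a)).
by apply/forallP => a'; apply/implyP/incr.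
Qed.

Lemma enum_set_ord n (B : {set 'I_n}) : enum B = [seq x <- enum 'I_n | x \in B].
Proof. by rewrite {1}/enum_mem -enumT; apply: eq_filter. Qed.

Lemma nth_enum_set_incr n (B : {set 'I_n}) (i0 : 'I_n) k : #|B| = k ->
  {homo (fun a : 'I_k => nth i0 (enum B) a) : a a' / (a < a')%N}.
Proof.
move=> cardB a a' lt_aa'; have size_enum : size (enum B) = k by rewrite -cardB cardE.
have sorted_enum : sorted (relpre (@nat_of_ord n) ltn) (enum B).
  rewrite enum_set_ord; apply: sorted_filter (ltn_sorted_enum_ord n).
  by move=> ? ? ?; apply: ltn_trans.
by apply: (sorted_ltn_nth _ i0 sorted_enum); rewrite ?inE ?size_enum //; apply: ltn_trans.
Qed.

(* [i0] only serves as the default element of [nth]. *)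
Lemma sum_strictly_incr_codom (V : nmodType) n k (i0 : 'I_n) (g : {set 'I_n} -> V) :
  \sum_(bt : {ffun 'I_k -> 'I_n} | strictly_incr bt) g [set x in codom bt] =
  \sum_(B : {set 'I_n} | #|B| == k) g B.
Proof.
rewrite [RHS](reindex_onto (fun bt : {ffun 'I_k -> 'I_n} => [set x in codom bt])
                 (fun B => [ffun a : 'I_k => nth i0 (enum B) a])); last first.
  move=> B /eqP cardB; have size_enum : size (enum B) = k by rewrite -cardB cardE.
  apply/setP => x; rewrite inE; apply/codomP/idP => [[a ->]|xB].
    by rewrite ffunE -mem_enum mem_nth // size_enum.
  have ltx : (index x (enum B) < k)%N by rewrite -size_enum index_mem mem_enum.
  by exists (Ordinal ltx); rewrite ffunE nth_index // mem_enum.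
apply: eq_bigl => bt.
apply/idP/andP => [/strictly_incrP incr|[/eqP cardB /eqP <-]]; last first.
  by apply/strictly_incrP => a a' lt_aa'; rewrite !ffunE nth_enum_set_incr.
split; first by rewrite cardsE card_codom ?card_ord //; apply: incr_inj incr.
apply/eqP/ffunP => a; rewrite ffunE enum_set_ord.
rewrite (eq_filter (a2 := mem (codom bt))) => [|x]; last by rewrite inE.
by rewrite (filter_codom_incr incr) (nth_map a) ?size_enum_ord // nth_ord_enum.
Qed.

Lemma sum_sets_by_card (T : finType) (V : nmodType) (a : T) (G : {set T} -> V) :
  \sum_(B : {set T} | a \in B) G B =
  \sum_(k < #|T|) \sum_(B : {set T} | (#|B| == k.+1) && (a \in B)) G B.
Proof.
rewrite (exchange_big_dep (fun B : {set T} => a \in B)) /=; last by move=> k B _ /andP[].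
apply: eq_bigr => B aB; have B_gt0 : (0 < #|B|)%N by apply/card_gt0P; exists a.
have lt_B : (#|B|.-1 < #|T|)%N by rewrite prednK ?max_card.
rewrite (big_pred1 (Ordinal lt_B)) // => k; rewrite aB andbT.
by apply/eqP/eqP => [cardB|->]; [apply/val_inj; rewrite /= cardB | rewrite /= prednK].
Qed.

Section Coefficients.
Variables (R : comNzRingType) (n : nat) (N : 'M[quat R]_n) (i : 'I_n).

Lemma sum_principal_cdet_on k :
  sum_principal_cdet k N i = \sum_(B : {set 'I_n} | (#|B| == k) && (i \in B)) cdet_on N i B.
Proof.
rewrite big_mkcondr -(sum_strictly_incr_codom _ i) /sum_principal_cdet.
apply: eq_bigr => bt /strictly_incrP incr; rewrite inE.
have [/codomP[a ->]|iNb] := boolP (i \in codom bt); last first.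
  by apply: big_pred0 => a; apply: contraNF iNb => /eqP <-; apply: codom_f.
rewrite (big_pred1 a) => [|a']; first exact/esym/cdet_on_incr.
by rewrite /= (inj_eq (incr_inj incr)).
Qed.

Lemma coef_sum_cdet_on k :
  (if k == n then cdet i N else sum_principal_cdet k N i) =
  \sum_(B : {set 'I_n} | (#|B| == k) && (i \in B)) cdet_on N i B.
Proof.
case: eqP => [->|_]; last exact: sum_principal_cdet_on.
rewrite (big_pred1 setT) ?cdet_on_setT // => B.
rewrite /=; have [->|BnT] := eqVneq B setT; first by rewrite cardsT card_ord eqxx inE.
by move: BnT; rewrite eqEcard subsetT cardsT card_ord -ltnNge => /ltn_eqF ->.
Qed.

End Coefficients.

Unset Implicit Arguments.

Theorem lemma4p3 (R : realType) (m n : nat) (A : 'M[quat R]_(m, n)) (t : R)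
    (i : 'I_n) (j : 'I_m) :
  let N := col_repl (conjtr A *m A) i (col j (conjtr A)) in
  let c := fun k : nat =>
    if k == n then cdet i N else sum_principal_cdet k N i in
  cdet i (col_repl ((qreal t)%:M + conjtr A *m A) i (col j (conjtr A)))
  = \sum_(k < n) c k.+1 * qreal (t ^+ (n - k.+1)).
Proof.
move=> N c; rewrite cdet_col_repl_scalar_add -/N.
rewrite sum_sets_by_card card_ord; apply: eq_bigr => k _.
rewrite /c coef_sum_cdet_on qrealX mulr_suml.
by apply: eq_bigr => B /andP[/eqP ->].
Qed.
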